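(* Let $\epsilon=\epsilon_1\cdots\epsilon_n$ be an inversion sequence, and let $\epsilon'$ be the sequence obtained by applying Algorithm A (described below) to $\epsilon$. Then $\epsilon'$ is also an inversion sequence.
   Context: An inversion sequence of length $n$ is an integer sequence $\epsilon_1\cdots\epsilon_n$ with $0\le\epsilon_i<i$ for all $i$. The reduction of an integer word replaces each occurrence of its $k$-th smallest distinct value by $k-1$; a consecutive pattern $\underline{p_1p_2p_3p_4}$ occurs in a sequence at position $i$ if the reduction of its entries in positions $i,i+1,i+2,i+3$ equals $p_1p_2p_3p_4$. Let $p=\underline{0102}$ and $q=\underline{0112}$. Algorithm A, on input an integer sequence $\mathrm{seq}=\epsilon_1\cdots\epsilon_n$: let $E_p$, $E_q$ be the sets of positions of occurrences of $p$, resp. $q$, in the input sequence; set $\mathrm{last}:=$ null. For $i=1,2,\dots,n$ in order: let $N_p,N_q$ be the sets of positions of occurrences of $p$, resp. $q$, in the current sequence. If $i-2\in E_p$: set $\mathrm{last}:=\mathrm{seq}[i]$ and $\mathrm{seq}[i]:=\mathrm{seq}[i-1]$. Else if $i-2\in E_q$: set $\mathrm{last}:=\mathrm{seq}[i]$ and $\mathrm{seq}[i]:=\mathrm{seq}[i-2]$. Else if $i-2\in N_p$ or $i-2\in N_q$: swap the values of $\mathrm{seq}[i]$ and $\mathrm{last}$. Output $\mathrm{seq}$. *)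

From mathcomp Require Import all_boot.
Set Implicit Arguments. Unset Strict Implicit. Unset Printing Implicit Defensive.

(* Positions are 1-indexed as in the paper: seq[i] is [nth _ s (i-1)]. *)

Definition inversion_seq (e : seq nat) : Prop :=
  forall i, i < size e -> nth 0 e i < i.+1.

Definition reduce (w : seq nat) : seq nat :=
  [seq index x (sort leq (undup w)) | x <- w].

(* Working sequences carry [option nat] entries, [None] standing for the value
   "null" (which can only enter the sequence through a swap with last = null). *)
Definition window (s : seq (option nat)) (j : nat) : seq (option nat) :=
  [seq nth None s (j + k - 1) | k <- iota 0 4].

Definition occurs_at (pat : seq nat) (s : seq (option nat)) (j : nat) : bool :=
  [&& 1 <= j, j + 3 <= size s, all isSome (window s j)
    & reduce (pmap id (window s j)) == pat].

Definition pat_p : seq nat := [:: 0; 1; 0; 2].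
Definition pat_q : seq nat := [:: 0; 1; 1; 2].

(* One iteration (index i) of Algorithm A; s0 is the input sequence
   (used for E_p, E_q), st = (current sequence, last). *)
Definition stepA (s0 : seq (option nat)) (st : seq (option nat) * option nat)
    (i : nat) : seq (option nat) * option nat :=
  let: (s, last) := st in
  if occurs_at pat_p s0 (i - 2) then
    (set_nth None s i.-1 (nth None s (i - 2)), nth None s i.-1)
  else if occurs_at pat_q s0 (i - 2) then
    (set_nth None s i.-1 (nth None s (i - 3)), nth None s i.-1)
  else if occurs_at pat_p s (i - 2) || occurs_at pat_q s (i - 2) then
    (set_nth None s i.-1 last, nth None s i.-1)
  else (s, last).

Definition algorithmA (e : seq nat) : seq (option nat) :=
  let s0 := [seq Some x | x <- e] in
  (foldl (stepA s0) (s0, None) (iota 1 (size e))).1.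

(* Every step of Algorithm A writes into position i a value read from position
   i-1, i-2 or from [last], and [last] always holds a value that was at some
   position < i.  Hence the invariant "the entry at position k is < k" survives each
   step.  The only way to write null would be a swap while [last] is still
   null; but until the first write the current sequence is the input, so the
   sets N_p, N_q agree with E_p, E_q and that branch is never reached. *)
From mathcomp Require Import all_boot.

Definition bounded_entries (s : seq (option nat)) : Prop :=
  forall k, k < size s -> exists2 v, nth None s k = Some v & v <= k.

Lemma bounded_entriesP (s : seq (option nat)) :
  bounded_entries s <-> exists2 e, s = [seq Some x | x <- e] & inversion_seq e.
Proof.
split=> [sB | [e -> eI] k]; last first.
  rewrite size_map => ke; exists (nth 0 e k); first by rewrite (nth_map 0).
  exact: eI.
exists [seq odflt 0 o | o <- s].
  apply: (@eq_from_nth _ None); first by rewrite !size_map.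
  move=> k ks; rewrite (nth_map 0) ?size_map // (nth_map None) //.
  by have [v -> _] := sB k ks.
move=> k; rewrite size_map => ks; rewrite (nth_map None) //.
by have [v -> /=] := sB k ks.
Qed.

Lemma bounded_entries_set_nth (s : seq (option nat)) k y :
  bounded_entries s -> k < size s -> y <= k ->
  bounded_entries (set_nth None s k (Some y)).
Proof.
move=> sB ks yk j; rewrite nth_set_nth size_set_nth (maxn_idPr ks) /=.
by case: eqP => [-> | _ /sB]; first by exists y.
Qed.

Lemma bounded_entries_copy (s : seq (option nat)) j k :
  bounded_entries s -> j <= k -> k < size s ->
  bounded_entries (set_nth None s k (nth None s j)).
Proof.
move=> sB jk ks; have [v -> vj] := sB j (leq_ltn_trans jk ks).
exact/bounded_entries_set_nth/(leq_trans vj).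
Qed.

Lemma foldl_iota_ind {T : Type} {P : nat -> T -> Prop} (f : T -> nat -> T)
    (m n : nat) (x : T) :
  P m x -> (forall i y, m <= i < m + n -> P i y -> P i.+1 (f y i)) ->
  P (m + n) (foldl f x (iota m n)).
Proof.
elim: n m x => [|n IH] m x Px Pf /=; first by rewrite addn0.
rewrite -addSnnS; apply: IH => [|i y /andP[mi ni]]; apply: Pf => //.
  by rewrite leqnn addnS ltnS leq_addr.
by rewrite addnS -addSn ni ltnW.
Qed.

Definition stepA_invariant (s0 : seq (option nat)) (i : nat)
    (st : seq (option nat) * option nat) : Prop :=
  let: (s, last) := st in
  [/\ size s = size s0, bounded_entries s & if last is Some v then v < i else s = s0].

Lemma stepA_invariantS s0 i st :
  0 < i <= size s0 -> stepA_invariant s0 i st ->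
  stepA_invariant s0 i.+1 (stepA s0 st i).
Proof.
case: st => s last /andP[i_gt0 i_le] [s_size sB last_inv].
have i_lt : i.-1 < size s by rewrite s_size prednK.
have size_set y : size (set_nth None s i.-1 y) = size s0.
  by rewrite size_set_nth s_size; apply/maxn_idPr; rewrite -s_size.
have [w old_eq w_le] := sB _ i_lt.
have old_bound : w < i.+1 by rewrite ltnS (leq_trans w_le (leq_pred i)).
have push_copy j : j <= i.-1 -> stepA_invariant s0 i.+1
    (set_nth None s i.-1 (nth None s j), nth None s i.-1).
  by move=> ji; rewrite old_eq; split; [exact: size_set | exact: bounded_entries_copy |].
rewrite /stepA; case: ifP => [_ | Ep]; first by apply: push_copy; rewrite -subn1 leq_sub2l.
case: ifP => [_ | Eq]; first by apply: push_copy; rewrite -subn1 leq_sub2l.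
case: last last_inv => [v v_lt | s_eq]; last by subst s; rewrite Ep Eq; split.
case: ifP => _; last by split=> //; apply: ltnW.
rewrite old_eq; split; [exact: size_set | | exact: old_bound].
by apply: bounded_entries_set_nth => //; rewrite -ltnS prednK.
Qed.

Theorem proposition1 (e : seq nat) :
  inversion_seq e ->
  exists e' : seq nat, algorithmA e = [seq Some x | x <- e'] /\ inversion_seq e'.
Proof.
move=> eI; set s0 := [seq Some x | x <- e].
have init : stepA_invariant s0 1 (s0, None).
  by split=> //; apply/bounded_entriesP; exists e.
have := foldl_iota_ind (stepA s0) 1 (size e) (s0, None) init.
rewrite /algorithmA -/s0; case: foldl => s last [|_ /bounded_entriesP[e' -> e'I] _].
  by move=> i st /andP[i_gt0 i_lt]; apply: stepA_invariantS; rewrite size_map i_gt0.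
by exists e'.
Qed.
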